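(* Let $G=(V,E)$ be a finite graph and suppose $r\in R(V)$ is an isoperimetric order on $V$ for $G$ which has initial-segment closure. Then \[ b(G) = \min_{r' \in R(V)} \max_{0 \le k \le |V|} |B_G(r'_k)|. \]
   Context: An order of $V$ is a bijection $r:V\to\{0,\ldots,|V|-1\}$; $R(V)$ denotes the set of all orders. For an order $r$ and $0\le k\le |V|$, the $k$-th initial segment is $r_k = r^{-1}(\{0,\ldots,k-1\})$. The graph bandwidth is $b(G)=\min_{r\in R(V)}\max_{\{v,w\}\in E}|r(v)-r(w)|$. For $W\subseteq V$, the vertex boundary $B_G(W)$ is the set of vertices in $V\setminus W$ adjacent to some vertex of $W$, and the vertex boundary closure is $C_G(W)=W\cup B_G(W)$. An order $r$ is an isoperimetric order on $V$ for $G$ if for every order $r'$ of $V$ and every $0\le k\le |V|$, $|B_G(r_k)|\le |B_G(r'_k)|$. An order $r$ has initial-segment closure if for every $k$, $C_G(r_k)$ is itself an initial segment of $r$ (i.e. equals $r_{k'}$ for some $k'$). *)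

From mathcomp Require Import all_boot.
Set Implicit Arguments. Unset Strict Implicit. Unset Printing Implicit Defensive.

Definition simple_graph (V : finType) (e : rel V) : Prop :=
  symmetric e /\ irreflexive e.

(* Orders of V: bijections V -> {0,...,|V|-1}, represented as finite functions
   into 'I_#|V| that are injective (hence bijective, by cardinality). *)
Definition is_order (V : finType) (r : {ffun V -> 'I_#|V|}) : bool := injectiveb r.

Definition init_seg (V : finType) (r : {ffun V -> 'I_#|V|}) (k : nat) : {set V} :=
  [set v | r v < k].

Definition vboundary (V : finType) (e : rel V) (W : {set V}) : {set V} :=
  [set v | (v \notin W) && [exists w in W, e w v]].

Definition vclosure (V : finType) (e : rel V) (W : {set V}) : {set V} :=
  W :|: vboundary e W.

Definition order_bandwidth (V : finType) (e : rel V) (r : {ffun V -> 'I_#|V|}) : nat :=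
  \max_(p : V * V | e p.1 p.2) (if r p.1 <= r p.2 then r p.2 - r p.1 else r p.1 - r p.2).

(* minimum over all orders; the default #|V| is an upper bound on every value
   involved and is never attained as the minimum of an empty family, since the
   set of orders is nonempty *)
Definition min_over_orders (V : finType) (f : {ffun V -> 'I_#|V|} -> nat) : nat :=
  \big[minn/#|V| * #|V| + #|V|]_(r : {ffun V -> 'I_#|V|} | is_order r) f r.

Definition bandwidth (V : finType) (e : rel V) : nat :=
  min_over_orders (order_bandwidth e).

Definition max_boundary (V : finType) (e : rel V) (r : {ffun V -> 'I_#|V|}) : nat :=
  \max_(k < #|V|.+1) #|vboundary e (init_seg r k)|.

Definition isoperimetric (V : finType) (e : rel V) (r : {ffun V -> 'I_#|V|}) : Prop :=
  is_order r /\
  forall r' : {ffun V -> 'I_#|V|}, is_order r' ->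
    forall k, k <= #|V| ->
      #|vboundary e (init_seg r k)| <= #|vboundary e (init_seg r' k)|.

Definition init_seg_closure (V : finType) (e : rel V) (r : {ffun V -> 'I_#|V|}) : Prop :=
  forall k, k <= #|V| -> exists2 k', k' <= #|V| & vclosure e (init_seg r k) = init_seg r k'.

From HB Require Import structures.
From mathcomp Require Import all_boot.
From mathcomp Require Import zify.

Set Implicit Arguments.
Unset Strict Implicit.
Unset Printing Implicit Defensive.

(* Write bw(r') for the largest stretch |r' u - r' v| of an edge u v.  For
   every order r' the boundary of r'_k only contains vertices at positions in
   [k, k + bw(r')), so max_k |B(r'_k)| <= bw(r'), and the isoperimetric order
   r minimizes max_k |B(r_k)|.  Conversely, initial-segment closure makes
   B(r_k) = r_k' \ r_k a block of consecutive positions; an edge u v with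
   r u <= r v puts v in the closure of r_(r u + 1), hence
   r v - r u <= |B(r_(r u + 1))|, i.e. bw(r) <= max_k |B(r_k)|.  Altogether
   b(G) <= bw(r) <= max_k |B(r_k)| = min_r' max_k |B(r'_k)| <= b(G). *)

(* minn has no neutral element on nat, hence only a semigroup law. *)
HB.instance Definition _ := SemiGroup.isComLaw.Build nat minn minnA minnC.

Lemma bigmin_le_cond (I : finType) (P : pred I) (F : I -> nat) x i0 :
  P i0 -> \big[minn/x]_(i | P i) F i <= F i0.
Proof. by move=> Pi0; rewrite (bigD1 i0) //= geq_minl. Qed.

Lemma leq_bigmin (I : finType) (P : pred I) (F : I -> nat) x m :
  m <= x -> (forall i, P i -> m <= F i) -> m <= \big[minn/x]_(i | P i) F i.
Proof.
by move=> mx mF; elim/big_ind: _ => // a b ma mb; rewrite leq_min ma mb.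
Qed.

Section MinOverOrders.
Variable V : finType.
Implicit Types (r : {ffun V -> 'I_#|V|}) (f g : {ffun V -> 'I_#|V|} -> nat).

Lemma min_over_orders_le f r : is_order r -> min_over_orders f <= f r.
Proof. exact: bigmin_le_cond. Qed.

Lemma le_min_over_orders f g :
  (forall r, is_order r -> f r <= g r) ->
  min_over_orders f <= min_over_orders g.
Proof.
move=> fg; apply: (big_ind2 leq) => // a b c d ab cd.
by rewrite leq_min !geq_min ab cd orbT.
Qed.

Lemma min_over_orders_attained f r :
  is_order r -> f r <= #|V| -> (forall r', is_order r' -> f r <= f r') ->
  min_over_orders f = f r.
Proof.
move=> r_order frV fr_min; apply/eqP; rewrite eqn_leq min_over_orders_le //.
by apply: leq_bigmin => //; apply: leq_trans frV (leq_addl _ _).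
Qed.

End MinOverOrders.

Lemma card_ord_prefix n k : #|[set i : 'I_n | i < k]| = minn k n.
Proof.
case: (leqP k n) => [kn | /ltnW nk]; last first.
  rewrite -[RHS]card_ord; apply: eq_card => i.
  by rewrite !inE (leq_trans (ltn_ord i) nk).
have -> : [set i : 'I_n | i < k] = widen_ord kn @: [set: 'I_k].
  apply/setP => i; rewrite inE; apply/idP/imsetP => [ik | [j _ ->]].
    by exists (Ordinal ik); last exact: val_inj.
  exact: (ltn_ord j).
rewrite card_imset ?cardsT ?card_ord // => i j /(congr1 val) /= ij.
exact: val_inj.
Qed.

Section InitialSegments.
Variables (V : finType) (e : rel V) (r : {ffun V -> 'I_#|V|}).

Lemma init_seg_subset k k' : k <= k' -> init_seg r k \subset init_seg r k'.
Proof.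
by move=> kk'; apply/subsetP => v; rewrite !inE => /leq_trans; apply.
Qed.

Lemma card_init_seg k : is_order r -> #|init_seg r k| = minn k #|V|.
Proof.
move=> /injectiveP r_inj.
have r_bij : bijective r by apply: inj_card_bij; rewrite ?card_ord.
rewrite -card_ord_prefix -(on_card_preimset (onW_bij _ r_bij)).
by apply: eq_card => v; rewrite !inE.
Qed.

Lemma card_init_segD k k' : is_order r -> k <= k' ->
  #|init_seg r k' :\: init_seg r k| = minn k' #|V| - minn k #|V|.
Proof.
move=> r_order kk'.
by rewrite cardsD (setIidPr (init_seg_subset kk')) !card_init_seg.
Qed.

Lemma edge_stretch_le_order_bandwidth u v :
  e u v -> r u <= r v -> r v - r u <= order_bandwidth e r.
Proof.
move=> euv ruv; apply: leq_trans (leq_bigmax_cond (u, v) euv).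
by rewrite /= ruv.
Qed.

Lemma vboundary_init_seg_subset k :
  vboundary e (init_seg r k)
    \subset init_seg r (k + order_bandwidth e r) :\: init_seg r k.
Proof.
apply/subsetP => v; rewrite !inE -leqNgt => /andP[kv /existsP[u /andP[]]].
rewrite inE => uk euv; rewrite kv /=.
have := edge_stretch_le_order_bandwidth euv (ltnW (leq_trans uk kv)).
by rewrite leq_subLR => /leq_ltn_trans; apply; rewrite ltn_add2r.
Qed.

Lemma max_boundary_le_order_bandwidth :
  is_order r -> max_boundary e r <= order_bandwidth e r.
Proof.
move=> r_order; apply/bigmax_leqP => k _.
apply: leq_trans (subset_leq_card (vboundary_init_seg_subset k)) _.
rewrite card_init_segD ?leq_addr //; lia.
Qed.

Lemma leq_max_boundary k :
  k <= #|V| -> #|vboundary e (init_seg r k)| <= max_boundary e r.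
Proof.
rewrite -ltnS => kV.
exact: (leq_bigmax (F := fun k : 'I_#|V|.+1 => #|vboundary e (init_seg r k)|)
  (Ordinal kV)).
Qed.

Lemma max_boundary_le_card : max_boundary e r <= #|V|.
Proof. by apply/bigmax_leqP => k _; apply: max_card. Qed.

Lemma vboundaryE (W : {set V}) : vboundary e W = vclosure e W :\: W.
Proof. by apply/setP => v; rewrite !inE; case: (v \in W). Qed.

Lemma closure_edge_stretch_le_max_boundary u v :
  is_order r -> init_seg_closure e r ->
  e u v -> r u <= r v -> r v - r u <= max_boundary e r.
Proof.
move=> r_order r_closed euv ruv; have ru_lt : (r u).+1 <= #|V| := ltn_ord (r u).
have [k' k'V closure_eq] := r_closed _ ru_lt.
have : v \in vclosure e (init_seg r (r u).+1).
  rewrite !inE; case: ltnP => //= _.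
  by apply/existsP; exists u; rewrite !inE ltnSn.
rewrite closure_eq inE => rv_lt.
apply: leq_trans (leq_max_boundary ru_lt).
rewrite vboundaryE closure_eq card_init_segD //; lia.
Qed.

Lemma order_bandwidth_le_max_boundary :
  symmetric e -> is_order r -> init_seg_closure e r ->
  order_bandwidth e r <= max_boundary e r.
Proof.
move=> e_sym r_order r_closed; apply/bigmax_leqP => -[u v] /= euv.
case: (leqP (r u) (r v)) => [ruv | /ltnW rvu];
  apply: closure_edge_stretch_le_max_boundary => //.
by rewrite e_sym.
Qed.

End InitialSegments.

Lemma isoperimetric_max_boundary_le (V : finType) (e : rel V)
    (r r' : {ffun V -> 'I_#|V|}) :
  isoperimetric e r -> is_order r' -> max_boundary e r <= max_boundary e r'.
Proof.
move=> [_ r_iso] r'_order; apply/bigmax_leqP => k _.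
have kV : k <= #|V| by rewrite -ltnS.
exact: leq_trans (r_iso r' r'_order k kV) (leq_max_boundary e r' kV).
Qed.

Theorem lemma3 (V : finType) (e : rel V) (r : {ffun V -> 'I_#|V|}) :
  simple_graph e ->
  isoperimetric e r ->
  init_seg_closure e r ->
  bandwidth e = min_over_orders (max_boundary e).
Proof.
move=> [e_sym _] r_iso r_closed; have r_order : is_order r := r_iso.1.
have min_max_boundary : min_over_orders (max_boundary e) = max_boundary e r.
  apply: min_over_orders_attained => //; first exact: max_boundary_le_card.
  by move=> r'; apply: isoperimetric_max_boundary_le.
apply/eqP; rewrite eqn_leq min_max_boundary; apply/andP; split.
  apply: leq_trans (min_over_orders_le _ r_order) _.
  exact: order_bandwidth_le_max_boundary.
rewrite -min_max_boundary; apply: le_min_over_orders => r' r'_order.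
exact: max_boundary_le_order_bandwidth.
Qed.
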